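(* Let $G$ be a group and $(A,B)$ a VH-structure in $G$. Let $S_{A,B}$ be the square complex with a single vertex $x$, oriented edge set $A\sqcup B$ with orientation reversal $e\mapsto e^{-1}$, and with one square for each relation $ab = b'a'$ in $G$ with $a,a'\in A$, $b,b'\in B$, namely the square given by the 4-tuple $(a,b,a'^{-1},b'^{-1})$, where the four 4-tuples $(a,b,a'^{-1},b'^{-1})$, $(a',b^{-1},a^{-1},b')$, $(a^{-1},b',a',b^{-1})$, $(a'^{-1},b'^{-1},a,b)$ (coming from the equivalent relations $a'b^{-1}=b'^{-1}a$, $a^{-1}b'=ba'^{-1}$, $a'^{-1}b'^{-1}=b^{-1}a^{-1}$) define the same square. Then the link $\mathrm{Lk}_x$ of $S_{A,B}$ at $x$ is the complete bipartite graph with one class of vertices labelled by $A$ and the other labelled by $B$.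
   Context: A VH-structure in a group $G$ is an ordered pair $(A,B)$ of finite subsets of $G$ such that: (1) taking inverses induces fixed-point-free involutions on $A$ and on $B$; (2) $A\cup B$ generates $G$; (3) the product sets $AB$ and $BA$ have size $\#A\cdot\#B$ and $AB=BA$; (4) $AB$ and $BA$ contain no elements of order $2$. The link $\mathrm{Lk}_x$ at a vertex $x$ of a square complex is the (multi-)graph whose vertices are the oriented edges originating at $x$ and whose edges joining $a,b$ are the corners of squares at $x$ containing the edges $a$ and $b$. *)

From mathcomp Require Import all_boot monoid.
Set Implicit Arguments.
Unset Strict Implicit.
Unset Printing Implicit Defensive.
Local Open Scope group_scope.

(* Finite subsets of the (possibly infinite) group G are duplicate-free
   sequences; they are only used through membership and cardinality. *)
Section VH.
Variable G : groupType.

Definition prodset (X Y : seq G) : seq G := [seq x * y | x <- X, y <- Y].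

Definition inv_fpf_involution (X : seq G) : Prop :=
  forall x, x \in X -> (x^-1 \in X) /\ (x^-1 != x).

Definition generates (S : seq G) : Prop :=
  forall g : G, exists w : seq G,
    all (fun x => (x \in S) || (x^-1 \in S)) w /\ g = \prod_(x <- w) x.

Definition order_two (g : G) : bool := (g * g == 1) && (g != 1).

Definition VH_structure (A B : seq G) : Prop :=
  [/\ uniq A /\ uniq B,
      inv_fpf_involution A /\ inv_fpf_involution B,
      generates (A ++ B),
      [/\ size (undup (prodset A B)) = (size A * size B)%N,
          size (undup (prodset B A)) = (size A * size B)%N &
          prodset A B =i prodset B A] &
      (forall g, g \in prodset A B -> ~~ order_two g) /\
      (forall g, g \in prodset B A -> ~~ order_two g)].

(* Oriented edges of S_{A,B}: the disjoint union A ⊔ B, encoded as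
   inl a (a in A) and inr b (b in B); orientation reversal is e |-> e^-1. *)
Definition edge := (G + G)%type.

Definition is_edge (A B : seq G) (e : edge) : bool :=
  match e with inl a => a \in A | inr b => b \in B end.

Definition rev_edge (e : edge) : edge :=
  match e with inl a => inl a^-1 | inr b => inr b^-1 end.

(* a relation a b = b' a' is recorded as the quadruple (a, b, a', b') *)
Definition rel := (G * G * G * G)%type.

Definition relations (A B : seq G) : seq rel :=
  filter (fun r : rel => let: (a, b, a', b') := r in a * b == b' * a')
    [seq (ab.1, ab.2, ab'.1, ab'.2)
       | ab <- [seq (a, b) | a <- A, b <- B],
         ab' <- [seq (a', b') | a' <- A, b' <- B]].

Definition boundary (r : rel) : edge * edge * edge * edge :=
  let: (a, b, a', b') := r in (inl a, inr b, inl a'^-1, inr b'^-1).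

(* the three equivalent relations a'b^-1 = b'^-1 a, a^-1 b' = b a'^-1,
   a'^-1 b'^-1 = b^-1 a^-1, giving the tuples
   (a',b^-1,a^-1,b'), (a^-1,b',a',b^-1), (a'^-1,b'^-1,a,b) *)
Definition equiv_rels (r : rel) : seq rel :=
  let: (a, b, a', b') := r in
  [:: (a, b, a', b'); (a', b^-1, a, b'^-1); (a^-1, b', a'^-1, b);
      (a'^-1, b'^-1, a^-1, b^-1)].

Definition same_square (r r' : rel) : bool := r' \in equiv_rels r.

Fixpoint square_reps (s : seq rel) : seq rel :=
  match s with
  | [::] => [::]
  | r :: s' => r :: [seq r' <- square_reps s' | ~~ same_square r r']
  end.

Definition squares (A B : seq G) : seq rel := square_reps (relations A B).

(* corners of a square with boundary (e1,e2,e3,e4): the corner between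
   e_i and e_{i+1} joins the oriented edges e_i^-1 and e_{i+1}
   (both originating at the vertex between them) *)
Definition corners (t : edge * edge * edge * edge) : seq (edge * edge) :=
  let: (e1, e2, e3, e4) := t in
  [:: (rev_edge e1, e2); (rev_edge e2, e3); (rev_edge e3, e4);
      (rev_edge e4, e1)].

(* all corners of all squares at the unique vertex x (edges of Lk_x) *)
Definition link_edges (A B : seq G) : seq (edge * edge) :=
  flatten [seq corners (boundary r) | r <- squares A B].

Definition link_mult (A B : seq G) (u v : edge) : nat :=
  count (fun c => (c == (u, v)) || (c == (v, u))) (link_edges A B).

Definition link_vertex (A B : seq G) (e : edge) : bool := is_edge A B e.

Definition side_A (e : edge) : bool := if e is inl _ then true else false.

End VH.

From Pilot Require Import Defs.
From mathcomp Require Import all_boot monoid.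
Set Implicit Arguments.
Unset Strict Implicit.
Unset Printing Implicit Defensive.

(* Label a corner of Lk_x by the pair (a, b) in A x B of its endpoints, and a
   relation a b = b' a' by (a^-1, b).  The four corners of the square of a
   relation carry exactly the labels of its four equivalent relations, and
   since every relation lies in exactly one square, the labels of all corners
   are a permutation of the labels of all relations.  Finally, for a in A and
   b in B the element a b of AB = BA factors uniquely as b' a', so each label
   (a^-1, b) occurs exactly once.  That the four equivalent relations are
   pairwise distinct is where the absence of elements of order 2 in AB is
   used. *)

Section ClassRepresentatives.
Variables (T : eqType) (cls : T -> seq T).
Hypothesis cls_refl : forall x, x \in cls x.
Hypothesis cls_eq : forall x y, y \in cls x -> cls y =i cls x.

Fixpoint class_reps (s : seq T) : seq T :=
  if s is r :: s' then r :: [seq r' <- class_reps s' | r' \notin cls r] else [::].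

Lemma cls_sym x y : y \in cls x -> x \in cls y.
Proof. by move/cls_eq->. Qed.

Lemma filter_class_reps (P : pred T) s :
  (forall x y, y \in cls x -> P x = P y) ->
  [seq z <- class_reps s | P z] = class_reps [seq z <- s | P z].
Proof.
move=> clsP; elim: s => //= x s IHs; case Px: (P x) => /=; rewrite -IHs.
  by rewrite -!filter_predI; congr (_ :: _); apply: eq_filter => z /=; rewrite andbC.
rewrite -filter_predI; apply: eq_filter => z /=.
by case Pz: (P z); rewrite ?andbF //=; apply/negP => /clsP; rewrite Px Pz.
Qed.

Lemma perm_flatten_class_reps s :
  uniq s -> (forall r, r \in s -> uniq (cls r) /\ {subset cls r <= s}) ->
  perm_eq (flatten (map cls (class_reps s))) s.
Proof.
have [n] := ubnP (size s); elim: n s => // n IHn [//|r s'] /= /ltnSE size_s'.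
case/andP=> r_s' uniq_s' cls_s; have [uniq_r sub_r] := cls_s r (mem_head _ _).
rewrite (filter_class_reps (P := fun z => z \notin cls r)); last first.
  move=> x y y_x; congr negb; apply/idP/idP => [x_r|y_r].
    by rewrite -(cls_eq x_r).
  by rewrite -(cls_eq y_r) cls_sym.
set t := [seq z <- s' | z \notin cls r].
have perm_t : perm_eq (flatten (map cls (class_reps t))) t.
  apply: IHn; first by rewrite size_filter (leq_ltn_trans (count_size _ _)).
    by rewrite filter_uniq.
  move=> x; rewrite mem_filter => /andP[x_r x_s'].
  have [uniq_x sub_x] := cls_s x (mem_behead (s := r :: s') x_s').
  split=> // z z_x; rewrite mem_filter.
  have z_s := sub_x z z_x; rewrite inE in z_s.
  apply/andP; split.
    by apply: contra x_r => z_r; rewrite -(cls_eq z_r) cls_sym.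
  by case/orP: z_s => // /eqP z_r; rewrite -z_r cls_sym in x_r.
rewrite -(perm_cat2l (cls r)) in perm_t; apply: perm_trans perm_t _.
apply: uniq_perm; rewrite ?cat_uniq ?uniq_r ?filter_uniq //=.
- by rewrite andbT; apply/hasPn => z; rewrite mem_filter => /andP[].
- by rewrite r_s'.
move=> z; rewrite mem_cat mem_filter inE.
case z_r: (z \in cls r) => /=; first by have := sub_r z z_r; rewrite inE.
by apply/idP/orP => [|[/eqP z_eq|//]]; [right | rewrite z_eq cls_refl in z_r].
Qed.

End ClassRepresentatives.

Lemma perm_flatten_map (T : Type) (U : eqType) (F H : T -> seq U) s :
  (forall x, perm_eq (F x) (H x)) -> perm_eq (flatten (map F s)) (flatten (map H s)).
Proof. by move=> FH; elim: s => //= x s IHs; rewrite perm_cat. Qed.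

Lemma uniq_map_inj_in (T U : eqType) (f : T -> U) s :
  uniq (map f s) -> {in s &, injective f}.
Proof.
elim: s => //= x s IHs /andP[fx_s uniq_fs] y z; rewrite !inE.
case/predU1P=> [->|y_s]; case/predU1P=> [->|z_s] // fyz.
- by rewrite fyz map_f in fx_s.
- by rewrite -fyz map_f in fx_s.
- exact: IHs.
Qed.

Section Relations.
Variable G : groupType.
Local Open Scope group_scope.
Implicit Types (A B X Y : seq G) (r : Defs.rel G).

Lemma inv_fpf_mem X x : inv_fpf_involution X -> (x^-1 \in X) = (x \in X).
Proof.
by move=> invX; apply/idP/idP => [/invX[]|/invX[] //]; rewrite invgK.
Qed.

Lemma prodset_mulg_inj X Y : size (undup (prodset X Y)) = (size X * size Y)%N ->
  forall x1 x2 y1 y2, x1 \in X -> x2 \in X -> y1 \in Y -> y2 \in Y ->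
  x1 * y1 = x2 * y2 -> x1 = x2 /\ y1 = y2.
Proof.
move=> size_XY x1 x2 y1 y2 x1X x2X y1Y y2Y.
have : uniq (prodset X Y).
  by apply: negbNE; rewrite -ltn_size_undup size_XY size_allpairs ltnn.
rewrite /prodset -(map_allpairs (fun p => p.1 * p.2) pair) => /uniq_map_inj_in inj.
by move/(inj (x1, y1) (x2, y2) (allpairs_f _ x1X y1Y) (allpairs_f _ x2X y2Y)) => [].
Qed.

Lemma mem_relations A B a b a' b' :
  ((a, b, a', b') \in relations A B) =
  [&& a \in A, b \in B, a' \in A, b' \in B & a * b == b' * a'].
Proof.
rewrite mem_filter andbC; case: (a * b == _); rewrite ?andbT ?andbF //.
apply/allpairsP/and4P => [[[[p q] [p' q']]] /=|[aA bB a'A b'B]].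
  case=> /allpairsP[[x y] /= [xA yB [-> ->]]] /allpairsP[[x' y'] /= [x'A y'B [-> ->]]].
  by case=> -> -> -> ->.
by exists ((a, b), (a', b')); split; rewrite ?allpairs_f.
Qed.

Lemma uniq_relations A B : uniq A -> uniq B -> uniq (relations A B).
Proof.
move=> uniqA uniqB.
have uniqAB : uniq [seq (a, b) | a <- A, b <- B].
  by apply: allpairs_uniq => // -[p q] [p' q'] _ _ [-> ->].
rewrite filter_uniq // allpairs_uniq //.
by move=> [[p q] [p' q']] [[s t] [s' t']] _ _ [-> -> -> ->].
Qed.

Lemma equiv_rels_refl r : r \in equiv_rels r.
Proof. by case: r => [[[a b] a'] b']; rewrite mem_head. Qed.

Lemma equiv_rels_eq r r' : r' \in equiv_rels r -> equiv_rels r' =i equiv_rels r.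
Proof.
case: r => [[[a b] a'] b']; rewrite !inE => /or4P[]/eqP-> z; rewrite /= !inE ?invgK;
by do 4!case: (z == _); rewrite ?orbT.
Qed.

Definition rel_label r : option (G * G) := let: (a, b, _, _) := r in Some (a^-1, b).

Definition corner_label (c : edge G * edge G) : option (G * G) :=
  match c with
  | (inl a, inr b) | (inr b, inl a) => Some (a, b)
  | _ => None
  end.

Lemma corner_label_boundary r :
  perm_eq (map corner_label (corners (boundary r))) (map rel_label (equiv_rels r)).
Proof.
case: r => [[[a b] a'] b']; rewrite /= !invgK !perm_cons.
by apply/permP => p /=; rewrite !addn0 addnC.
Qed.

Lemma corner_labelE c x y :
  (corner_label c == Some (x, y)) = (c == (inl x, inr y)) || (c == (inr y, inl x)).
Proof.
case: c => [[p|p] [q|q]]; apply/eqP/orP => //=; try by case=> /eqP.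
- by case=> -> ->; left.
- by case=> /eqP[] // -> ->.
- by case=> -> ->; right.
- by case=> /eqP[] // -> ->.
Qed.

Lemma corner_label_same_side c u v : side_A u = side_A v ->
  (c == (u, v)) || (c == (v, u)) -> corner_label c = None.
Proof. by case: u v => [x|y] [x'|y'] // _ /orP[]/eqP->. Qed.

End Relations.

Arguments corner_label {G} c.
Arguments rel_label {G} r.

Section VHStructure.
Variables (G : groupType) (A B : seq G).
Hypothesis vhAB : VH_structure A B.
Local Open Scope group_scope.

Let uniqA : uniq A. Proof. by case: vhAB => -[]. Qed.
Let uniqB : uniq B. Proof. by case: vhAB => -[]. Qed.
Let invA : inv_fpf_involution A. Proof. by case: vhAB => _ []. Qed.
Let invB : inv_fpf_involution B. Proof. by case: vhAB => _ []. Qed.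

Let mulAB_inj : forall a1 a2 b1 b2, a1 \in A -> a2 \in A -> b1 \in B -> b2 \in B ->
  a1 * b1 = a2 * b2 -> a1 = a2 /\ b1 = b2.
Proof. by apply: prodset_mulg_inj; case: vhAB => _ _ _ []. Qed.

Let mulBA_inj : forall b1 b2 a1 a2, b1 \in B -> b2 \in B -> a1 \in A -> a2 \in A ->
  b1 * a1 = b2 * a2 -> b1 = b2 /\ a1 = a2.
Proof. by apply: prodset_mulg_inj; case: vhAB => _ _ _ [_ + _]; rewrite mulnC. Qed.

Lemma prodAB_neq_inv a b : a \in A -> b \in B -> a * b != (a * b)^-1.
Proof.
move=> aA bB; apply/eqP => ab_inv.
have : ~~ order_two (a * b) by case: vhAB => _ _ _ _ [noAB _]; apply/noAB/allpairs_f.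
rewrite /order_two {1}ab_inv mulVg eqxx negbK => /eqP/mulg1_eq a_inv.
have [a'A a'_neq] := invA aA.
have a'B : a^-1 \in B by rewrite a_inv.
have aB : a \in B by rewrite -(inv_fpf_mem _ invB).
have [a_eq _] := mulAB_inj aA a'A a'B aB (etrans (mulgV a) (esym (mulVg a))).
by rewrite -a_eq eqxx in a'_neq.
Qed.

Lemma uniq_equiv_rels r : r \in relations A B -> uniq (equiv_rels r).
Proof.
case: r => [[[a b] a'] b']; rewrite mem_relations => /and5P[aA bB a'A b'B /eqP rel_ab].
have [_ /eqP a_neq] := invA aA; have [_ /eqP a'_neq] := invA a'A.
have [_ /eqP b_neq] := invB bB; have [_ /eqP b'_neq] := invB b'B.
have not_inv : a' = a^-1 -> b' = b^-1 -> False.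
  by move=> a'E b'E; case/eqP: (prodAB_neq_inv aA bB); rewrite invgM -a'E -b'E.
rewrite /= !inE !negb_or !andbT -!andbA; repeat (apply/andP; split).
all: apply/eqP => -[]; intros; solve [congruence | apply: not_inv; congruence].
Qed.

Lemma equiv_rels_sub r : r \in relations A B -> {subset equiv_rels r <= relations A B}.
Proof.
case: r => [[[a b] a'] b']; rewrite mem_relations => /and5P[aA bB a'A b'B /eqP rel_ab].
have [a_A _] := invA aA; have [a'_A _] := invA a'A.
have [b_B _] := invB bB; have [b'_B _] := invB b'B.
move=> z; rewrite !inE => /or4P[]/eqP->; rewrite mem_relations ?invgK.
- by rewrite aA bB a'A b'B rel_ab eqxx.
- by rewrite a'A b_B aA b'_B /=; apply/eqP/(mulgI b'); rewrite mulgA -rel_ab mulgK mulVKg.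
- by rewrite a_A b'B a'_A bB /=; apply/eqP/(mulgI a); rewrite mulVKg mulgA rel_ab mulgK.
- by rewrite a'_A b'_B a_A b_B /= -!invgM rel_ab.
Qed.

Lemma perm_link_labels :
  perm_eq (map corner_label (link_edges A B)) (map rel_label (relations A B)).
Proof.
rewrite /link_edges map_flatten -map_comp.
apply: perm_trans (perm_flatten_map _ (@corner_label_boundary G)) _.
rewrite (map_comp (map rel_label) (@equiv_rels G)) -map_flatten; apply: perm_map.
have -> : squares A B = class_reps (@equiv_rels G) (relations A B).
  by rewrite /squares; elim: (relations A B) => //= r s ->.
apply: perm_flatten_class_reps; first exact: equiv_rels_refl.
- exact: equiv_rels_eq.
- exact: uniq_relations.
by move=> r rAB; split; [apply: uniq_equiv_rels | apply: equiv_rels_sub].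
Qed.

Lemma count_relations_label x y :
  count (fun r => rel_label r == Some (x, y)) (relations A B) = (x \in A) && (y \in B).
Proof.
rewrite -(inv_fpf_mem _ invA); case xyAB: (_ && _); last first.
  rewrite (eq_in_count (a2 := pred0)) ?count_pred0 // => -[[[a b] a'] b'].
  rewrite mem_relations => /and5P[aA bB _ _ _] /=; apply/negP => /eqP[x_eq y_eq].
  by rewrite -x_eq -y_eq invgK aA bB in xyAB.
case/andP: xyAB => x'A yB.
have eqAB : prodset A B =i prodset B A by case: vhAB => _ _ _ [].
have : x^-1 * y \in prodset B A by rewrite -eqAB allpairs_f.
case/allpairsP => -[b' a'] /= [b'B a'A rel_xy].
rewrite (eq_in_count (a2 := pred1 (x^-1, y, a', b'))).
  by rewrite count_uniq_mem ?uniq_relations // mem_relations x'A yB a'A b'B rel_xy eqxx.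
move=> [[[a b] c] d]; rewrite mem_relations => /and5P[_ _ cA dB /eqP rel_ab] /=.
apply/eqP/eqP => [[a_eq b_y]|[-> -> _ _]]; last by rewrite invgK.
have a_x : a = x^-1 by rewrite -a_eq invgK.
rewrite a_x b_y in rel_ab *.
by have [-> ->] := mulBA_inj dB b'B cA a'A (etrans (esym rel_ab) rel_xy).
Qed.

Lemma count_link_label x y :
  count (pred1 (Some (x, y))) (map corner_label (link_edges A B)) = (x \in A) && (y \in B).
Proof. by rewrite (permP perm_link_labels) count_map count_relations_label. Qed.

Lemma link_label_neq_None c : c \in link_edges A B -> corner_label c != None.
Proof.
move=> /(map_f corner_label); rewrite (perm_mem perm_link_labels).
by case/mapP => -[[[a b] a'] b'] _ ->.
Qed.

Lemma link_mult_same_side u v : side_A u = side_A v -> link_mult A B u v = 0%N.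
Proof.
move=> same_side; rewrite /link_mult (eq_in_count (a2 := pred0)) ?count_pred0 //.
move=> c /link_label_neq_None; apply: contraNF.
by move/(corner_label_same_side same_side) ->.
Qed.

Lemma link_mult_mixed x y : link_mult A B (inl x) (inr y) = (x \in A) && (y \in B).
Proof.
rewrite -count_link_label count_map; apply: eq_count => c.
by rewrite /= corner_labelE.
Qed.

End VHStructure.

Lemma link_multC (G : groupType) (A B : seq G) u v : link_mult A B u v = link_mult A B v u.
Proof. by apply: eq_count => c; rewrite orbC. Qed.

Theorem lemma1 (G : groupType) (A B : seq G) :
  VH_structure A B ->
  (forall u v : edge G,
     link_mult A B u v =
     (if [&& link_vertex A B u, link_vertex A B v & side_A u != side_A v]
      then 1 else 0)%N).
Proof.
move=> vhAB u v.
case: u => [x|y]; case: v => [x'|y'] /=; rewrite ?andbF ?andbT.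
- exact: link_mult_same_side.
- by rewrite link_mult_mixed //; case: (_ && _).
- by rewrite link_multC link_mult_mixed // andbC; case: (_ && _).
- exact: link_mult_same_side.
Qed.
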